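(* Let $q$ be a prime power and $m$ a prime number. Then there is a loop $L$ of order $q^{m^2}-1$ whose center is $\mathbb{F}_q^\times\cdot 1$, whose left, middle and right nuclei are all $\mathbb{F}_{q^m}^\times\cdot 1$, and whose automorphism group is non-trivial and contains a cyclic subgroup of inner automorphisms of order $s=(q^m-1)/(q-1)$.
   Context: A loop is a set with a binary operation and identity element $1$ in which, in $xy=z$, any two of $x,y,z$ determine the third uniquely. Its left, middle and right nuclei are the sets of $x$ with $(xy)z=x(yz)$, resp. $(yx)z=y(xz)$, resp. $(yz)x=y(zx)$, for all $y,z$; the center consists of nuclear elements commuting with all elements. The statement ''$\mathbb{F}_{q}^\times\cdot 1$'' etc. refers to $L$ being realized as the nonzero elements of a finite unital division algebra over $\mathbb{F}_q$ containing $\mathbb{F}_{q^m}$ as a subfield $\mathbb{F}_{q^m}\cdot 1$. An inner automorphism is a loop automorphism of the form $x\mapsto (c_lx)c$ where $c_l$ is the left inverse of $c$. *)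

From HB Require Import structures.
From mathcomp Require Import all_boot all_order all_algebra all_fingroup all_solvable all_field.
Set Implicit Arguments. Unset Strict Implicit. Unset Printing Implicit Defensive.
Import GRing.Theory.
Local Open Scope ring_scope.

Section Loops.
Variables (T : finType) (op : T -> T -> T) (e : T).

Definition is_loop : Prop :=
  (forall x, op e x = x /\ op x e = x) /\
  (forall x z, exists! y, op x y = z) /\
  (forall y z, exists! x, op x y = z).

Definition left_nucleus : {set T} :=
  [set x | [forall y, forall z, op (op x y) z == op x (op y z)]].
Definition middle_nucleus : {set T} :=
  [set x | [forall y, forall z, op (op y x) z == op y (op x z)]].
Definition right_nucleus : {set T} :=
  [set x | [forall y, forall z, op (op y z) x == op y (op z x)]].
Definition loop_center : {set T} :=
  [set x in left_nucleus :&: middle_nucleus :&: right_nucleus |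
     [forall y, op x y == op y x]].

Definition loop_aut : {set {perm T}} :=
  [set f : {perm T} | [forall x, forall y, f (op x y) == op (f x) (f y)]].

Definition is_inner_aut (f : {perm T}) : Prop :=
  f \in loop_aut /\
  exists c cl : T, op cl c = e /\ forall x, f x = op (op cl x) c.
End Loops.

Section Alg.
Variables (F : finFieldType) (n : nat).
Notation V := 'rV[F]_n.
Variables (mul : V -> V -> V) (one : V).

Definition is_unital_division_algebra : Prop :=
  (forall (a : F) (x y z : V), mul (a *: x + y) z = a *: mul x z + mul y z) /\
  (forall (a : F) (x y z : V), mul z (a *: x + y) = a *: mul z x + mul z y) /\
  (forall x, mul one x = x /\ mul x one = x) /\
  (forall a, a != 0 -> bijective (mul a) /\ bijective (fun x => mul x a)).

Definition is_subfield (K : {set V}) : Prop :=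
  (forall c : F, c *: one \in K) /\
  (forall x y, x \in K -> y \in K -> x + y \in K) /\
  (forall (c : F) x, x \in K -> c *: x \in K) /\
  (forall x y, x \in K -> y \in K -> mul x y \in K) /\
  (forall x y, x \in K -> y \in K -> mul x y = mul y x) /\
  (forall x y z, x \in K -> y \in K -> z \in K ->
      mul (mul x y) z = mul x (mul y z)) /\
  (forall x, x \in K -> x != 0 -> exists2 y, y \in K & mul x y = one).
End Alg.

Notation nzvec F n := {x : 'rV[F]_n | x != 0}.

(* Let L be the degree-m extension of F = F_q, sigma its Frobenius and a an element of L
   outside F. The nonassociative cyclic algebra (L/F, sigma, a) is L^m, read as
   L + L t + ... + L t^(m-1) with t^i x = sigma^i(x) t^i and t^m = a. Left multiplication
   by t is a sigma-semilinear map T whose m-th power is diagonal with entries the conjugates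
   sigma^l(a), pairwise distinct since m is prime. Hence every nonzero T-stable L-subspace
   contains a basis vector, and then everything; so y, T y, ..., T^(m-1) y are independent
   for y <> 0, and x y = sum_i x_i T^i y vanishes only for x = 0. The associator
   [t^u, t^(m-u), t^u] has coefficient a - sigma^u(a) <> 0, which confines the three nuclei
   to L and the centre to the fixed field F. Conjugation by a nuclear c in L^x is a loop
   automorphism acting on coordinates by x_i |-> c^-1 sigma^i(c) x_i; it is trivial exactly
   when c lies in F, so a generator of L^x gives a cyclic group of inner automorphisms of
   order (q^m - 1)/(q - 1). *)

From HB Require Import structures.
From mathcomp Require Import all_boot all_order all_algebra all_fingroup all_solvable all_field.
From mathcomp Require Import zify ring.
Set Implicit Arguments. Unset Strict Implicit. Unset Printing Implicit Defensive.
Import GRing.Theory.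
Local Open Scope ring_scope.

Lemma iter_gcdn_fixed (T : Type) (f : T -> T) x i j :
  iter i f x = x -> iter j f x = x -> iter (gcdn i j) f x = x.
Proof.
have iter_mul_fixed k l : iter l f x = x -> iter (k * l) f x = x.
  by move=> fx; rewrite iterM iter_fix.
case: (posnP i) => [-> _ //|i_gt0 fix_i fix_j]; first by rewrite gcd0n.
have [b _ /dvdnP[c def_c]] := Bezoutl j i_gt0.
by rewrite -{2}(iter_mul_fixed c i fix_i) -def_c iterD iter_mul_fixed.
Qed.

Section Iterates.
Variables (L : fieldType) (s : {rmorphism L -> L}).

Definition sigma i : L -> L := iter i s.

Lemma sigma_is_nmod_morphism i : nmod_morphism (sigma i).
Proof. by split=> [|x y]; elim: i => //= i ->; rewrite ?rmorph0 ?rmorphD. Qed.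
Lemma sigma_is_monoid_morphism i : monoid_morphism (sigma i).
Proof. by split=> [|x y]; elim: i => //= i ->; rewrite ?rmorph1 ?rmorphM. Qed.
HB.instance Definition _ i :=
  GRing.isNmodMorphism.Build L L (sigma i) (sigma_is_nmod_morphism i).
HB.instance Definition _ i :=
  GRing.isMonoidMorphism.Build L L (sigma i) (sigma_is_monoid_morphism i).

Lemma sigmaM i x y : sigma i (x * y) = sigma i x * sigma i y.
Proof. exact: rmorphM. Qed.

Lemma sigmaD i j x : sigma (i + j) x = sigma i (sigma j x).
Proof. exact: iterD. Qed.

End Iterates.

Section LoopConjugation.
Variables (T : finType) (op : T -> T -> T) (e : T).
Hypothesis loopT : is_loop op e.

Lemma loop_lmul_inj c : injective (op c).
Proof.
move=> x y eq_xy; have [_ [ldiv _]] := loopT; have [w [_ w_uniq]] := ldiv c (op c x).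
by rewrite -(w_uniq x erefl) (w_uniq y (esym eq_xy)).
Qed.

Lemma loop_rmul_inj c : injective (op^~ c).
Proof.
move=> x y eq_xy; have [_ [_ rdiv]] := loopT; have [w [_ w_uniq]] := rdiv c (op x c).
by rewrite -(w_uniq x erefl) (w_uniq y (esym eq_xy)).
Qed.

Definition conj_map (cl c x : T) := op (op cl x) c.

Lemma conj_map_inj cl c : injective (conj_map cl c).
Proof. by move=> x y /loop_rmul_inj/loop_lmul_inj. Qed.

Definition conj_perm cl c : {perm T} := perm (@conj_map_inj cl c).

Lemma conj_perm_aut cl c : op c cl = e ->
  c \in left_nucleus op -> c \in middle_nucleus op -> c \in right_nucleus op ->
  cl \in left_nucleus op -> conj_perm cl c \in loop_aut op.
Proof.
move=> c_cl; rewrite !inE.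
move=> /'forall_'forall_eqP Nl_c /'forall_'forall_eqP Nm_c /'forall_'forall_eqP Nr_c.
move=> /'forall_'forall_eqP Nl_cl; apply/'forall_'forall_eqP => x y; rewrite !permE /conj_map.
by rewrite -Nr_c Nm_c -Nl_c c_cl (proj1 (loopT.1 y)) [in RHS]Nl_cl.
Qed.

Lemma conj_perm_inner cl c : op cl c = e -> conj_perm cl c \in loop_aut op ->
  is_inner_aut op e (conj_perm cl c).
Proof. by move=> cl_c aut_c; split=> //; exists c, cl; split=> // x; rewrite permE. Qed.

End LoopConjugation.

Lemma card_nzvec (F : finFieldType) n : #|[set: nzvec F n]| = (#|F| ^ n - 1)%N.
Proof.
rewrite cardsT card_sig -[n in (_ ^ n)%N]mul1n -(card_mx F 1 n) subn1 -(cardC1 0).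
by apply: eq_card => x; rewrite !inE.
Qed.

Section DivisionAlgebraLoop.
Variables (F : finFieldType) (n : nat).
Local Notation V := 'rV[F]_n.
Variables (mul : V -> V -> V) (one : V).
Hypotheses (divA : is_unital_division_algebra mul one) (one_neq0 : one != 0).

Lemma dmul0l y : mul 0 y = 0.
Proof.
apply: (addrI (mul 0 y)); have := divA.1 1 0 0 y.
by rewrite !scale1r !addr0 => <-.
Qed.

Lemma dmul0r x : mul x 0 = 0.
Proof.
apply: (addrI (mul x 0)); have := divA.2.1 1 0 0 x.
by rewrite !scale1r !addr0 => <-.
Qed.

Lemma dmul_neq0 x y : x != 0 -> y != 0 -> mul x y != 0.
Proof.
move=> x_neq0; apply: contra_neq => xy0; have [/bij_inj mul_x_inj _] := divA.2.2.2 x x_neq0.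
by apply: mul_x_inj; rewrite xy0 dmul0r.
Qed.

Definition nz_mul (x y : nzvec F n) : nzvec F n :=
  exist _ (mul (val x) (val y)) (dmul_neq0 (valP x) (valP y)).
Definition nz_one : nzvec F n := exist _ one one_neq0.

Lemma nz_solution (f : V -> V) : bijective f -> f 0 = 0 ->
  forall z : nzvec F n, exists! y : nzvec F n, f (val y) = val z.
Proof.
move=> [g fK gK] f0 z; have gz_neq0 : g (val z) != 0.
  by apply: contraTneq (valP z) => gz0; rewrite -[val z]gK gz0 f0 eqxx.
exists (Sub (g (val z)) gz_neq0); split=> [|y fy]; first by rewrite SubK gK.
by apply: val_inj; rewrite SubK -fy fK.
Qed.

Lemma nz_mul_loop : is_loop nz_mul nz_one.
Proof.
split; [|split] => [x | x z | y z].
- by have [l1 r1] := divA.2.2.1 (val x); split; apply: val_inj.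
- have [y [fy y_uniq]] := nz_solution (divA.2.2.2 _ (valP x)).1 (dmul0r _) z.
  by exists y; split=> [|y' /(congr1 val)]; [apply: val_inj | apply: y_uniq].
- have [x [fx x_uniq]] := nz_solution (divA.2.2.2 _ (valP y)).2 (dmul0l _) z.
  by exists x; split=> [|x' /(congr1 val)]; [apply: val_inj | apply: x_uniq].
Qed.

Lemma nz_forall2 (P : V -> V -> bool) : (forall z, P 0 z) -> (forall y, P y 0) ->
  [forall y : nzvec F n, forall z : nzvec F n, P (val y) (val z)] = [forall y, forall z, P y z].
Proof.
move=> P0l P0r; apply/'forall_'forall_idP/'forall_'forall_idP => [Pnz y z | PV y z //].
have [-> // | y_neq0] := eqVneq y 0; have [-> // | z_neq0] := eqVneq z 0.
by have := Pnz (Sub y y_neq0) (Sub z z_neq0); rewrite !SubK.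
Qed.

Lemma nz_left_nucleus : left_nucleus nz_mul = [set x | val x \in left_nucleus mul].
Proof.
apply/setP => x; rewrite !inE -nz_forall2 => [|z|y]; last 2 first.
- by rewrite dmul0r dmul0l dmul0r.
- by rewrite !dmul0r.
by apply: eq_forallb => y; apply: eq_forallb => z; rewrite -val_eqE.
Qed.

Lemma nz_middle_nucleus : middle_nucleus nz_mul = [set x | val x \in middle_nucleus mul].
Proof.
apply/setP => x; rewrite !inE -nz_forall2 => [|z|y]; last 2 first.
- by rewrite !dmul0l.
- by rewrite !dmul0r.
by apply: eq_forallb => y; apply: eq_forallb => z; rewrite -val_eqE.
Qed.

Lemma nz_right_nucleus : right_nucleus nz_mul = [set x | val x \in right_nucleus mul].
Proof.
apply/setP => x; rewrite !inE -nz_forall2 => [|z|y]; last 2 first.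
- by rewrite !dmul0l.
- by rewrite dmul0r !dmul0l dmul0r.
by apply: eq_forallb => y; apply: eq_forallb => z; rewrite -val_eqE.
Qed.

Lemma nz_loop_center : loop_center nz_mul = [set x | val x \in loop_center mul].
Proof.
rewrite /loop_center nz_left_nucleus nz_middle_nucleus nz_right_nucleus.
apply/setP => x; rewrite !inE; congr (_ && _).
apply/forallP/forallP => [comm_x y | comm_x y]; last by rewrite -val_eqE comm_x.
have [-> | y_neq0] := eqVneq y 0; first by rewrite dmul0l dmul0r.
by have := comm_x (Sub y y_neq0); rewrite -val_eqE SubK.
Qed.

End DivisionAlgebraLoop.

Section PetitAlgebra.
Variables (L : fieldType) (s : {rmorphism L -> L}) (m : nat) (a : L).
Hypotheses (m_gt1 : (1 < m)%N) (s_order : forall x, sigma s m x = x).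
Local Notation sig := (sigma s).
Local Notation V := 'rV[L]_m.

Let m_gt0 : (0 < m)%N := ltnW m_gt1.
Definition idx0 : 'I_m := Ordinal m_gt0.
Definition idx1 : 'I_m := Ordinal m_gt1.

(* A row [x] stands for [\sum_i x_i t^i]; [tmul] is left multiplication by [t]. *)
Definition tmul (y : V) : V :=
  \row_k (s (y 0 (ord_pred k)) * (if val k == 0%N then a else 1)).
Definition pmul (x y : V) : V := \sum_(i < m) x 0 i *: iter i tmul y.
Definition pone : V := 'e_idx0.

Definition idx_add (i : nat) (j : 'I_m) : 'I_m := iter i (@ordS m) j.
(* [t^i t^j = twist i j t^(i + j mod m)] for [i, j < m]. *)
Definition twist (i j : nat) : L :=
  if (i + j < m)%N then 1 else sig (i + j - m) a.

Lemma val_idx_add i j : val (idx_add i j) = ((j + i) %% m)%N.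
Proof.
elim: i => [|i IH] /=; first by rewrite addn0 modn_small.
by rewrite IH -addn1 modnDml addn1 addnS.
Qed.

Lemma idx_add_period j : idx_add m j = j.
Proof. by apply: val_inj; rewrite val_idx_add modnDr modn_small. Qed.

Lemma tmulD u v : tmul (u + v) = tmul u + tmul v.
Proof. by apply/rowP => k; rewrite !mxE rmorphD mulrDl. Qed.
Lemma tmulZ c v : tmul (c *: v) = s c *: tmul v.
Proof. by apply/rowP => k; rewrite !mxE rmorphM mulrA. Qed.
Lemma tmul0 : tmul 0 = 0.
Proof. by have := tmulZ 0 0; rewrite !scale0r rmorph0 scale0r. Qed.

Lemma tmul_monomial c j :
  tmul (c *: 'e_j) = (s c * (if j.+1 == m then a else 1)) *: 'e_(ordS j).
Proof.
apply/rowP => k; rewrite !mxE !eqxx /= -(inj_eq (@ordS_inj m)) ord_predK eq_sym.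
have [-> | _] := eqVneq k (ordS j); last by rewrite !mulr0 rmorph0 mul0r.
rewrite /= !mulr1; congr (_ * _).
have := ltn_ord j; rewrite leq_eqVlt; case: eqP => [-> _ | _ /= lt]; first by rewrite modnn.
by rewrite modn_small.
Qed.

Lemma iter_tmulD i u v : iter i tmul (u + v) = iter i tmul u + iter i tmul v.
Proof. by elim: i => //= i ->; rewrite tmulD. Qed.
Lemma iter_tmulZ i c v : iter i tmul (c *: v) = sig i c *: iter i tmul v.
Proof. by elim: i => //= i ->; rewrite tmulZ. Qed.
Lemma iter_tmul0 i : iter i tmul 0 = 0.
Proof. by elim: i => //= i ->; rewrite tmul0. Qed.
Lemma iter_tmul_sum i I r (P : pred I) (F : I -> V) :
  iter i tmul (\sum_(k <- r | P k) F k) = \sum_(k <- r | P k) iter i tmul (F k).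
Proof. exact: (big_morph _ (iter_tmulD i) (iter_tmul0 i)). Qed.

Lemma twistS i (j : 'I_m) : (i < m)%N ->
  s (twist i j) * (if ((j + i) %% m).+1 == m then a else 1) = twist i.+1 j.
Proof.
move=> lt_im; have lt_jm := ltn_ord j; rewrite /twist addSn.
case: (ltnP (i + j) m) => [lt_ijm | le_mij].
  rewrite rmorph1 mul1r modn_small ?[(j + i)%N]addnC //.
  have [lt | eq] : ((i + j).+1 < m)%N \/ (i + j).+1 = m by lia.
    by rewrite lt ltn_eqF.
  by rewrite eq eqxx ltnn subnn.
have -> : ((j + i) %% m = i + j - m)%N.
  by rewrite addnC -{1}(subnK le_mij) modnDr modn_small //; lia.
have -> : (i + j - m).+1 == m = false by apply/negbTE; lia.
by rewrite mulr1 ltnNge ltnW //= subSn.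
Qed.

Lemma iter_tmul_monomial i c (j : 'I_m) : (i <= m)%N ->
  iter i tmul (c *: 'e_j) = (sig i c * twist i j) *: 'e_(idx_add i j).
Proof.
elim: i => [|i IH] le_im; first by rewrite /twist add0n ltn_ord mulr1.
by rewrite iterS IH 1?ltnW // tmul_monomial val_idx_add rmorphM -mulrA twistS.
Qed.

Lemma pmulDl x y z : pmul (x + y) z = pmul x z + pmul y z.
Proof. by rewrite /pmul -big_split; apply: eq_bigr => i _; rewrite mxE scalerDl. Qed.
Lemma pmulZl c x y : pmul (c *: x) y = c *: pmul x y.
Proof. by rewrite /pmul scaler_sumr; apply: eq_bigr => i _; rewrite mxE scalerA. Qed.
Lemma pmulDr x y z : pmul x (y + z) = pmul x y + pmul x z.
Proof. by rewrite /pmul -big_split; apply: eq_bigr => i _; rewrite iter_tmulD scalerDr. Qed.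
Lemma pmul0l y : pmul 0 y = 0.
Proof. by rewrite /pmul big1 // => i _; rewrite mxE scale0r. Qed.
Lemma pmul0r x : pmul x 0 = 0.
Proof. by rewrite /pmul big1 // => i _; rewrite iter_tmul0 scaler0. Qed.
Lemma pmulBl x y z : pmul (x - y) z = pmul x z - pmul y z.
Proof. by rewrite pmulDl -scaleN1r pmulZl scaleN1r. Qed.
Lemma pmulBr x y z : pmul x (y - z) = pmul x y - pmul x z.
Proof. by apply/eqP; rewrite eq_sym subr_eq -pmulDr subrK. Qed.
Lemma pmul_suml I r (P : pred I) (F : I -> V) y :
  pmul (\sum_(k <- r | P k) F k) y = \sum_(k <- r | P k) pmul (F k) y.
Proof. exact: (big_morph (pmul^~ y) (fun u v => pmulDl u v y) (pmul0l y)). Qed.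
Lemma pmul_sumr I r (P : pred I) (F : I -> V) x :
  pmul x (\sum_(k <- r | P k) F k) = \sum_(k <- r | P k) pmul x (F k).
Proof. exact: (big_morph _ (pmulDr x) (pmul0r x)). Qed.

Lemma pmul_monomiall i x z : pmul (x *: 'e_i) z = x *: iter i tmul z.
Proof.
rewrite /pmul (bigD1 i) //= big1 ?addr0 => [|k nik]; first by rewrite !mxE !eqxx mulr1.
by rewrite !mxE (negbTE nik) mulr0 scale0r.
Qed.

Lemma pmul_monomial (i j : 'I_m) x y :
  pmul (x *: 'e_i) (y *: 'e_j) = (x * sig i y * twist i j) *: 'e_(idx_add i j).
Proof. by rewrite pmul_monomiall iter_tmul_monomial 1?ltnW // scalerA mulrA. Qed.

Lemma pmul1l y : pmul pone y = y.
Proof. by rewrite -[pone]scale1r pmul_monomiall scale1r. Qed.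

Lemma pmul_scalarr x c : pmul x (c *: pone) = \row_i (x 0 i * sig i c).
Proof.
rewrite {1}[x]row_sum_delta pmul_suml [RHS]row_sum_delta; apply: eq_bigr => i _.
rewrite mxE pmul_monomial /twist /= addn0 ltn_ord mulr1.
by congr (_ *: delta_mx _ _); apply: val_inj; rewrite val_idx_add /= add0n modn_small.
Qed.

Lemma pmul1r x : pmul x pone = x.
Proof. by rewrite -[pone]scale1r pmul_scalarr; apply/rowP => i; rewrite !mxE rmorph1 mulr1. Qed.

Lemma sig_mod n x : sig (n %% m) x = sig n x.
Proof.
rewrite {2}(divn_eq n m) addnC /sigma iterD iterM.
by rewrite (iter_fix _ (s_order x)).
Qed.

Lemma tmul_period y : iter m tmul y = \row_l (sig l a * y 0 l).
Proof.
rewrite {1}[y]row_sum_delta iter_tmul_sum [RHS]row_sum_delta.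
apply: eq_bigr => l _; rewrite iter_tmul_monomial // idx_add_period s_order mxE mulrC.
by rewrite /twist ltnNge leq_addr /= addKn.
Qed.

Lemma pmulZr_fixed c x y : s c = c -> pmul x (c *: y) = c *: pmul x y.
Proof.
move=> sc; rewrite /pmul scaler_sumr; apply: eq_bigr => i _.
by rewrite iter_tmulZ /sigma iter_fix // !scalerA mulrC.
Qed.

Lemma sig_idx_add i j x : sig (idx_add i j) x = sig (j + i) x.
Proof. by rewrite val_idx_add sig_mod. Qed.

Lemma val_idx_add2 i j k : val (idx_add i (idx_add j k)) = ((k + j + i) %% m)%N.
Proof. by rewrite !val_idx_add modnDml. Qed.

Definition assoc x y z := pmul (pmul x y) z - pmul x (pmul y z).

Definition defect (i j k : 'I_m) : L :=
  twist i j * twist (idx_add i j) k - sig i (twist j k) * twist i (idx_add j k).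

Lemma assoc_monomial (i j k : 'I_m) x y z :
  assoc (x *: 'e_i) (y *: 'e_j) (z *: 'e_k) =
  (x * sig i y * sig (i + j) z * defect i j k) *: 'e_(idx_add i (idx_add j k)).
Proof.
rewrite /assoc !pmul_monomial.
have -> : idx_add (idx_add i j) k = idx_add i (idx_add j k).
  by apply: val_inj; rewrite val_idx_add2 !val_idx_add modnDmr addnA.
rewrite -scalerBl sig_idx_add [(j + i)%N]addnC /defect !sigmaM sigmaD; congr (_ *: _); ring.
Qed.

Lemma assoc_suml I r (P : pred I) (F : I -> V) y z :
  assoc (\sum_(k <- r | P k) F k) y z = \sum_(k <- r | P k) assoc (F k) y z.
Proof. by rewrite /assoc !pmul_suml sumrB. Qed.
Lemma assoc_summ I r (P : pred I) (F : I -> V) x z :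
  assoc x (\sum_(k <- r | P k) F k) z = \sum_(k <- r | P k) assoc x (F k) z.
Proof. by rewrite /assoc pmul_sumr !pmul_suml pmul_sumr sumrB. Qed.
Lemma assoc_sumr I r (P : pred I) (F : I -> V) x y :
  assoc x y (\sum_(k <- r | P k) F k) = \sum_(k <- r | P k) assoc x y (F k).
Proof. by rewrite /assoc !pmul_sumr sumrB. Qed.

Lemma defect0l j k : defect idx0 j k = 0.
Proof. by rewrite /defect /twist /= !add0n !ltn_ord mulr1 mul1r subrr. Qed.

Lemma idx_add0 (i : 'I_m) : idx_add i idx0 = i.
Proof. by apply: val_inj; rewrite val_idx_add add0n modn_small. Qed.

Lemma twist0r (i : 'I_m) : twist i idx0 = 1.
Proof. by rewrite /twist addn0 ltn_ord. Qed.

Lemma defect0m i k : defect i idx0 k = 0.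
Proof. by rewrite /defect twist0r idx_add0 /twist /= ltn_ord rmorph1 !mul1r subrr. Qed.

Lemma defect0r i j : defect i j idx0 = 0.
Proof. by rewrite /defect !twist0r idx_add0 rmorph1 !mulr1 mul1r subrr. Qed.

Lemma assoc_scalar_l c y z : assoc (c *: pone) y z = 0.
Proof.
rewrite [y]row_sum_delta assoc_summ big1 // => j _.
rewrite [z]row_sum_delta assoc_sumr big1 // => k _.
by rewrite assoc_monomial defect0l mulr0 scale0r.
Qed.

Lemma assoc_scalar_m c x z : assoc x (c *: pone) z = 0.
Proof.
rewrite [x]row_sum_delta assoc_suml big1 // => i _.
rewrite [z]row_sum_delta assoc_sumr big1 // => k _.
by rewrite assoc_monomial defect0m mulr0 scale0r.
Qed.

Lemma assoc_scalar_r c x y : assoc x y (c *: pone) = 0.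
Proof.
rewrite [x]row_sum_delta assoc_suml big1 // => i _.
rewrite [y]row_sum_delta assoc_summ big1 // => j _.
by rewrite assoc_monomial defect0r mulr0 scale0r.
Qed.

Definition idx_opp (i : 'I_m) : 'I_m := Ordinal (ltn_pmod (m - i) m_gt0).

Lemma val_idx_opp (i : 'I_m) : (0 < i)%N -> val (idx_opp i) = (m - i)%N.
Proof. by move=> i_gt0; rewrite /= modn_small //; lia. Qed.

Lemma idx_add_opp (i : 'I_m) : (0 < i)%N ->
  idx_add (idx_opp i) i = idx0 /\ idx_add i (idx_opp i) = idx0.
Proof.
move=> i_gt0; split; apply: val_inj; rewrite val_idx_add val_idx_opp // /=.
  by rewrite subnKC ?modnn // ltnW.
by rewrite subnK ?modnn // ltnW.
Qed.

Lemma twist_opp (i : 'I_m) : (0 < i)%N ->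
  twist (idx_opp i) i = a /\ twist i (idx_opp i) = a.
Proof.
move=> i_gt0; have le_im : (i <= m)%N by exact: ltnW.
by rewrite /twist val_idx_opp // subnK // addnC subnK // ltnn subnn.
Qed.

Lemma twist0l (j : 'I_m) : twist 0 j = 1.
Proof. by rewrite /twist add0n ltn_ord. Qed.

Lemma defect_opp_r (u : 'I_m) : (0 < u)%N -> defect u (idx_opp u) u = a - sig u a.
Proof.
move=> u_gt0; have [[Al Ar] [tl tr]] := (idx_add_opp u_gt0, twist_opp u_gt0).
by rewrite /defect Al Ar tl tr /= twist0l twist0r !mulr1.
Qed.

Lemma defect_opp_l (l : 'I_m) : (0 < l)%N -> defect (idx_opp l) l l = a - sig l a.
Proof.
move=> l_gt0; have [[Al _] [tl _]] := (idx_add_opp l_gt0, twist_opp l_gt0).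
rewrite /defect Al tl twist0l mulr1; congr (_ - _).
have lt_lm := ltn_ord l; rewrite /twist val_idx_add val_idx_opp //.
case: (ltnP (l + l) m) => [lt_llm | le_mll].
  rewrite rmorph1 mul1r modn_small // ifN; last by rewrite -leqNgt; lia.
  by have -> : (m - l + (l + l) - m = l)%N by lia.
have -> : ((l + l) %% m = l + l - m)%N.
  by rewrite -{1}(subnK le_mll) modnDr modn_small //; lia.
rewrite ifT; last by lia.
by rewrite mulr1 -sigmaD; have -> : (m - l + (l + l - m) = l)%N by lia.
Qed.

Lemma scalar_coords (x : V) :
  (forall i : 'I_m, (0 < i)%N -> x 0 i = 0) -> x = x 0 idx0 *: pone.
Proof.
move=> x0; apply/rowP => i; rewrite !mxE; case: (posnP i) => [i0 | i_gt0].
  by rewrite (_ : i = idx0) ?eqxx ?mulr1 //; apply: val_inj.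
rewrite x0 // (_ : i == idx0 = false) ?mulr0 //.
by apply/negbTE; apply: contraTneq i_gt0 => ->.
Qed.

Lemma sum_basis_coef (c : 'I_m -> L) u : (\sum_l c l *: ('e_l : V)) 0 u = c u.
Proof.
rewrite summxE (bigD1 u) //= big1 ?addr0 => [|l ne_lu]; rewrite !mxE ?eqxx ?mulr1 //.
by rewrite eq_sym (negbTE ne_lu) mulr0.
Qed.

Lemma assoc_coef_l x (u : 'I_m) : (0 < u)%N ->
  (assoc x 'e_(idx_opp u) 'e_u) 0 u = x 0 u * (a - sig u a).
Proof.
move=> u_gt0; rewrite {1}[x]row_sum_delta assoc_suml.
under eq_bigr => l _ do rewrite -[ 'e_(idx_opp u)]scale1r -[ 'e_u]scale1r assoc_monomial
  (idx_add_opp u_gt0).1 idx_add0 !rmorph1 !mulr1.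
by rewrite sum_basis_coef defect_opp_r.
Qed.

Lemma idx_add_opp_m (l j : 'I_m) : (0 < l)%N -> idx_add (idx_opp l) (idx_add j l) = j.
Proof.
move=> l_gt0; apply: val_inj; rewrite val_idx_add2 val_idx_opp //.
have -> : (l + j + (m - l) = j + m)%N by have := ltn_ord l; lia.
by rewrite modnDr modn_small.
Qed.

Lemma idx_add_opp_r (u k : 'I_m) : (0 < u)%N -> idx_add u (idx_add (idx_opp u) k) = k.
Proof.
move=> u_gt0; apply: val_inj; rewrite val_idx_add2 val_idx_opp //.
have -> : (k + (m - u) + u = k + m)%N by have := ltn_ord u; lia.
by rewrite modnDr modn_small.
Qed.

Lemma assoc_coef_m y (l : 'I_m) : (0 < l)%N ->
  (assoc 'e_(idx_opp l) y 'e_l) 0 l = sig (idx_opp l) (y 0 l) * (a - sig l a).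
Proof.
move=> l_gt0; rewrite {1}[y]row_sum_delta assoc_summ.
under eq_bigr => j _ do rewrite -[ 'e_(idx_opp l)]scale1r -[ 'e_l]scale1r assoc_monomial
  idx_add_opp_m // !rmorph1 mul1r mulr1.
by rewrite sum_basis_coef defect_opp_l.
Qed.

Lemma assoc_coef_r z (u : 'I_m) : (0 < u)%N ->
  (assoc 'e_u 'e_(idx_opp u) z) 0 u = z 0 u * (a - sig u a).
Proof.
move=> u_gt0; rewrite {1}[z]row_sum_delta assoc_sumr.
under eq_bigr => k _ do rewrite -[ 'e_u]scale1r -[ 'e_(idx_opp u)]scale1r assoc_monomial
  idx_add_opp_r // !rmorph1 !mul1r.
rewrite sum_basis_coef defect_opp_r // val_idx_opp // subnKC ?s_order //.
exact: ltnW.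
Qed.

Lemma pmul_conj_scalar c x :
  pmul (pmul (c^-1 *: pone) x) (c *: pone) = \row_i (c^-1 * x 0 i * sig i c).
Proof. by rewrite pmulZl pmul1l pmul_scalarr; apply/rowP => i; rewrite !mxE. Qed.

Lemma central_scalarP c :
  (forall y, pmul (c *: pone) y = pmul y (c *: pone)) <-> s c = c.
Proof.
split=> [/(_ 'e_idx1) | sc y]; last by rewrite pmulZl pmul1l pmulZr_fixed // pmul1r.
by rewrite pmulZl pmul1l pmul_scalarr => /rowP/(_ idx1); rewrite !mxE eqxx /= mulr1 mul1r.
Qed.

Section DistinctConjugates.
Hypothesis a_orbit : forall i, (0 < i < m)%N -> sig i a != a.

Lemma a_neq0 : a != 0.
Proof. by have := a_orbit (i := 1) m_gt1; apply: contraNneq => ->; rewrite rmorph0. Qed.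

Lemma sig_a_inj : injective (fun l : 'I_m => sig l a).
Proof.
suff le_inj (t l : 'I_m) : (t <= l)%N -> sig t a = sig l a -> t = l.
  by move=> t l; case: (leqP t l) => [/le_inj//|/ltnW/le_inj le_lt /esym/le_lt].
move=> le_tl eq_tl; apply/val_inj/eqP; rewrite eqn_leq le_tl leqNgt /=.
apply/negP => lt_tl; have: (0 < m - l + t < m)%N by have := ltn_ord l; lia.
by move/a_orbit; rewrite sigmaD eq_tl -sigmaD subnK ?s_order ?eqxx // ltnW.
Qed.

Definition tmul_stable k (M : 'M[L]_(k, m)) :=
  forall v : V, (v <= M)%MS -> (tmul v <= M)%MS.

Section Stable.
Variables (k : nat) (M : 'M[L]_(k, m)).
Hypothesis stableM : tmul_stable M.

Lemma iter_tmul_stable i (v : V) : (v <= M)%MS -> (iter i tmul v <= M)%MS.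
Proof. by move=> vM; elim: i => //= i; apply: stableM. Qed.

Lemma stable_has_basis_vector (w : V) :
  w != 0 -> (w <= M)%MS -> exists l, (('e_l : V) <= M)%MS.
Proof.
have [n] := ubnP #|[set l | w 0 l != 0]|; elim: n w => // n IH w lt_supp_n w_neq0 wM.
have [l wl_neq0] : exists l, w 0 l != 0.
  apply/existsP; apply: contraR w_neq0 => /existsPn w0.
  by apply/eqP/rowP => l; rewrite mxE; apply/eqP/negbNE.
have [/existsP[j /andP[j_neq_l wj_neq0]] | w_mono] := boolP [exists j, (j != l) && (w 0 j != 0)].
  pose w' := iter m tmul w + (- sig l a) *: w.
  have w'E t : w' 0 t = (sig t a - sig l a) * w 0 t.
    by rewrite !mxE tmul_period mxE mulrBl mulNr.
  have supp_w' : [set t | w' 0 t != 0] \proper [set t | w 0 t != 0].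
    apply/properP; split; last by exists l; rewrite !inE ?w'E ?subrr ?mul0r ?eqxx.
    by apply/subsetP => t; rewrite !inE w'E mulf_eq0 negb_or => /andP[].
  apply: (IH w'); first exact: leq_trans (proper_card supp_w') lt_supp_n.
    apply/eqP => /rowP/(_ j); rewrite w'E mxE => /eqP; rewrite mulf_eq0 (negbTE wj_neq0) orbF.
    by rewrite subr_eq0 => /eqP/sig_a_inj/eqP; rewrite (negbTE j_neq_l).
  by rewrite addmx_sub ?scalemx_sub ?iter_tmul_stable.
exists l; suff -> : 'e_l = (w 0 l)^-1 *: w by apply: scalemx_sub.
apply/rowP => t; rewrite !mxE eqxx /=; have [-> | t_neq_l] := eqVneq t l.
  by rewrite mulVf.
have := w_mono; rewrite negb_exists => /forallP/(_ t); rewrite t_neq_l /= negbK => /eqP ->.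
by rewrite mulr0.
Qed.

Lemma stable_row_full (w : V) : w != 0 -> (w <= M)%MS -> row_full M.
Proof.
move=> w_neq0 /(stable_has_basis_vector w_neq0)[l Ml].
have M_shift r : (('e_(idx_add r l) : V) <= M)%MS.
  elim: r => //= r IH.
  have := scalemx_sub (s 1 * (if (idx_add r l).+1 == m then a else 1))^-1 (stableM IH).
  rewrite -[X in tmul X]scale1r tmul_monomial scalerA mulVf ?scale1r //.
  by rewrite rmorph1 mul1r; case: ifP; rewrite ?a_neq0 ?oner_eq0.
rewrite -sub1mx; apply/row_subP => t; rewrite row1.
suff -> : t = idx_add (t + m - l) l by [].
apply: val_inj; rewrite val_idx_add addnBA; last by rewrite ltnW // ltn_addl.
by rewrite addnC addnK modnDr modn_small.
Qed.

End Stable.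

Lemma krylov_stable (y : V) N :
  (iter N tmul y <= \matrix_(k < N) iter k tmul y)%MS ->
  tmul_stable (\matrix_(k < N) iter k tmul y).
Proof.
move=> TN v /submxP[u ->]; rewrite mulmx_sum_row -[tmul _]/(iter 1 tmul _).
rewrite iter_tmul_sum summx_sub // => k _; rewrite iter_tmulZ rowK scalemx_sub //=.
rewrite -[tmul _]/(iter k.+1 tmul y); case: (ltnP k.+1 N) => [lt_k1N | le_Nk1].
  by apply: (eq_row_sub (Ordinal lt_k1N)); rewrite rowK.
by have -> : k.+1 = N by apply/eqP; rewrite eqn_leq le_Nk1 ltn_ord.
Qed.

Lemma krylov_free (y : V) : y != 0 -> forall N, (N <= m)%N -> forall g : nat -> L,
  \sum_(k < N) g k *: iter k tmul y = 0 -> forall k, (k < N)%N -> g k = 0.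
Proof.
move=> y_neq0; elim=> [//|N IH] lt_Nm g; rewrite big_ord_recr /=.
have [gN0 | gN_neq0] := eqVneq (g N) 0.
  rewrite gN0 scale0r addr0 => /(IH (ltnW lt_Nm)) g0 k.
  by rewrite ltnS leq_eqVlt => /orP[/eqP-> | /g0].
move=> sum0; exfalso; set M := \matrix_(k < N) iter k tmul y.
have TN : (iter N tmul y <= M)%MS.
  have -> : iter N tmul y = - (g N)^-1 *: \sum_(k < N) g k *: iter k tmul y.
    apply: (scalerI gN_neq0); rewrite scalerA mulrN divff // scaleN1r.
    by apply/eqP; rewrite -addr_eq0 addrC sum0.
  rewrite scalemx_sub // summx_sub // => k _; rewrite scalemx_sub //.
  by rewrite -(rowK (fun k : 'I_N => iter k tmul y)) row_sub.
have yM : (y <= M)%MS.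
  case: (posnP N) => [N0 | N_gt0]; last by apply: (eq_row_sub (Ordinal N_gt0)); rewrite rowK.
  exfalso; move: sum0 gN_neq0; rewrite N0 big_ord0 add0r /= => /eqP.
  by rewrite scaler_eq0 (negbTE y_neq0) orbF => ->.
have /eqP rankM := stable_row_full (krylov_stable TN) y_neq0 yM.
by have := rank_leq_row M; rewrite rankM leqNgt lt_Nm.
Qed.

Lemma pmul_neq0 x y : x != 0 -> y != 0 -> pmul x y != 0.
Proof.
move=> x_neq0 y_neq0; apply: contra x_neq0 => /eqP xy0; apply/eqP/rowP => i; rewrite mxE.
have := krylov_free y_neq0 (leqnn m) (g := fun k => x 0 (insubd i k)).
have gK (k : 'I_m) : insubd i k = k by apply: val_inj; rewrite val_insubd ltn_ord.
move/(_ _ _ (ltn_ord i)); rewrite gK; apply.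
by under eq_bigr do rewrite gK.
Qed.

Lemma pmul_injr x : x != 0 -> injective (pmul x).
Proof.
move=> x_neq0 y z eq_yz; apply/eqP; rewrite -subr_eq0; apply/negPn/negP => yz_neq0.
by have := pmul_neq0 x_neq0 yz_neq0; rewrite pmulBr eq_yz subrr eqxx.
Qed.

Lemma pmul_injl y : y != 0 -> injective (pmul^~ y).
Proof.
move=> y_neq0 x z eq_xz; apply/eqP; rewrite -subr_eq0; apply/negPn/negP => xz_neq0.
by have := pmul_neq0 xz_neq0 y_neq0; rewrite pmulBl eq_xz subrr eqxx.
Qed.

Lemma a_sub_neq0 (u : 'I_m) : (0 < u)%N -> a - sig u a != 0.
Proof. by move=> u_gt0; rewrite subr_eq0 eq_sym; apply: a_orbit; rewrite u_gt0 /=. Qed.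

Lemma left_nuclearP x : (forall y z, assoc x y z = 0) <-> exists c, x = c *: pone.
Proof.
split=> [nx | [c ->] y z]; last exact: assoc_scalar_l.
exists (x 0 idx0); apply: scalar_coords => u u_gt0; apply/eqP.
have := assoc_coef_l x u_gt0; rewrite nx mxE => /esym/eqP.
by rewrite mulf_eq0 (negbTE (a_sub_neq0 u_gt0)) orbF.
Qed.

Lemma middle_nuclearP y : (forall x z, assoc x y z = 0) <-> exists c, y = c *: pone.
Proof.
split=> [ny | [c ->] x z]; last exact: assoc_scalar_m.
exists (y 0 idx0); apply: scalar_coords => l l_gt0; apply/eqP.
have := assoc_coef_m y l_gt0; rewrite ny mxE => /esym/eqP.
by rewrite mulf_eq0 (negbTE (a_sub_neq0 l_gt0)) orbF fmorph_eq0.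
Qed.

Lemma right_nuclearP z : (forall x y, assoc x y z = 0) <-> exists c, z = c *: pone.
Proof.
split=> [nz | [c ->] x y]; last exact: assoc_scalar_r.
exists (z 0 idx0); apply: scalar_coords => u u_gt0; apply/eqP.
have := assoc_coef_r z u_gt0; rewrite nz mxE => /esym/eqP.
by rewrite mulf_eq0 (negbTE (a_sub_neq0 u_gt0)) orbF.
Qed.

End DistinctConjugates.

End PetitAlgebra.

Section Flatten.
Variables (F : fieldType) (L : fieldExtType F) (n : nat).

Local Notation coords := (passmx.rVof (vbasis {:L})).
Local Notation of_coords := (passmx.vecof (vbasis {:L})).

Definition flatten (x : 'rV[L]_n) : 'rV[F]_(n * \dim {:L}) :=
  mxvec (\matrix_i coords (x 0 i)).
Definition unflatten (v : 'rV[F]_(n * \dim {:L})) : 'rV[L]_n :=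
  \row_i of_coords (row i (vec_mx v)).

Lemma flattenK : cancel flatten unflatten.
Proof. by move=> x; apply/rowP => i; rewrite mxE mxvecK rowK passmx.rVofK ?vbasisP. Qed.

Lemma unflattenK : cancel unflatten flatten.
Proof.
move=> v; rewrite /flatten -[RHS]vec_mxK; congr mxvec.
by apply/row_matrixP => i; rewrite rowK mxE passmx.vecofK ?vbasisP.
Qed.

Lemma flatten_inj : injective flatten. Proof. exact: can_inj flattenK. Qed.
Lemma unflatten_inj : injective unflatten. Proof. exact: can_inj unflattenK. Qed.

Lemma flattenD x y : flatten (x + y) = flatten x + flatten y.
Proof.
rewrite /flatten -linearD; congr mxvec.
by apply/matrixP => i j; rewrite !mxE linearD.
Qed.

Lemma flattenZ (c : F) x : flatten (c%:A *: x) = c *: flatten x.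
Proof.
rewrite /flatten -linearZ; congr mxvec.
by apply/matrixP => i j; rewrite !mxE mulr_algl linearZ.
Qed.

Lemma flatten0 : flatten 0 = 0.
Proof. by have := flattenZ 0 0; rewrite !scale0r. Qed.

Lemma flatten_eq0 x : (flatten x == 0) = (x == 0).
Proof. by rewrite -flatten0 (inj_eq flatten_inj). Qed.

Lemma unflatten_eq0 v : (unflatten v == 0) = (v == 0).
Proof. by rewrite -flatten_eq0 unflattenK. Qed.

Lemma unflattenZ (c : F) (u : 'rV[F]_(n * \dim {:L})) :
  unflatten (c *: u) = c%:A *: unflatten u.
Proof. by apply: flatten_inj; rewrite flattenZ !unflattenK. Qed.

Lemma unflattenD (u v : 'rV[F]_(n * \dim {:L})) :
  unflatten (u + v) = unflatten u + unflatten v.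
Proof. by apply: flatten_inj; rewrite flattenD !unflattenK. Qed.

End Flatten.
Arguments flatten_inj {F L n}.
Arguments unflatten_inj {F L n}.

Lemma card_fieldExt (F : finFieldType) (L : fieldExtType F) :
  #|FinFieldExtType L| = (#|F| ^ \dim {:L})%N.
Proof. by have := card_vspace (fullv : {vspace finvect_type L}); rewrite card_vspacef. Qed.

Section PetitOverF.
Variables (F : finFieldType) (L : fieldExtType F) (s : {rmorphism L -> L}) (a : L).
Local Notation m := (\dim {:L}).
Hypotheses (m_gt1 : (1 < m)%N) (s_order : forall x, sigma s m x = x).
Hypothesis s_fixedP : forall x, s x = x <-> exists c : F, x = c%:A.
Hypothesis a_orbit : forall i, (0 < i < m)%N -> sigma s i a != a.
Local Notation W := 'rV[F]_(m * m).
Local Notation pmul := (pmul s a).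
Local Notation pone := (pone L m_gt1).

Definition fmul (u v : W) : W := flatten (pmul (unflatten u) (unflatten v)).
Definition fone : W := flatten pone.
Definition fscalars : {set W} := [set flatten (c *: pone) | c : FinFieldExtType L].

Lemma fmulE u v : unflatten (fmul u v) = pmul (unflatten u) (unflatten v).
Proof. exact: flattenK. Qed.

Lemma unflatten_fone : unflatten fone = pone.
Proof. exact: flattenK. Qed.

Lemma pone_neq0 : pone != 0.
Proof. by apply/eqP => /rowP/(_ (idx0 m_gt1)); rewrite !mxE !eqxx => /eqP; rewrite oner_eq0. Qed.

Lemma fone_neq0 : fone != 0.
Proof. by rewrite -unflatten_eq0 unflatten_fone pone_neq0. Qed.

Lemma fmul_division : is_unital_division_algebra fmul fone.
Proof.
split; [|split; [|split]].
- by move=> c x y z; rewrite /fmul unflattenD unflattenZ pmulDl pmulZl flattenD flattenZ.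
- move=> c x y z; rewrite /fmul unflattenD unflattenZ pmulDr pmulZr_fixed ?flattenD ?flattenZ //.
  by apply/s_fixedP; exists c.
- by move=> x; rewrite /fmul unflatten_fone pmul1l pmul1r unflattenK.
move=> u u_neq0; have uu_neq0 : unflatten u != 0 by rewrite unflatten_eq0.
split; apply: injF_bij => x y /flatten_inj.
  by move/(pmul_injr m_gt1 s_order a_orbit uu_neq0)/unflatten_inj.
by move/(pmul_injl m_gt1 s_order a_orbit uu_neq0)/unflatten_inj.
Qed.

Lemma fscalarsP u : reflect (exists c, unflatten u = c *: pone) (u \in fscalars).
Proof.
apply: (iffP imsetP) => [[c _ ->] | [c uc]]; first by exists c; rewrite flattenK.
by exists c => //; rewrite -uc unflattenK.
Qed.

Lemma card_fscalars : #|fscalars| = (#|F| ^ m)%N.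
Proof.
rewrite card_imset => [|c d /flatten_inj/eqP]; last first.
  by rewrite -subr_eq0 -scalerBl scaler_eq0 (negbTE pone_neq0) orbF subr_eq0 => /eqP.
exact: card_fieldExt.
Qed.

Lemma pmul_scalars c d : pmul (c *: pone) (d *: pone) = (c * d) *: pone.
Proof. by rewrite pmulZl pmul1l scalerA. Qed.

Lemma fscalars_subfield : is_subfield fmul fone fscalars.
Proof.
split; [|split; [|split; [|split; [|split; [|split]]]]].
- by move=> c; apply/fscalarsP; exists c%:A; rewrite unflattenZ unflatten_fone.
- move=> x y /fscalarsP[c ux] /fscalarsP[d uy]; apply/fscalarsP; exists (c + d).
  by rewrite unflattenD ux uy scalerDl.
- move=> c x /fscalarsP[d ux]; apply/fscalarsP; exists (c%:A * d).
  by rewrite unflattenZ ux scalerA.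
- move=> x y /fscalarsP[c ux] /fscalarsP[d uy]; apply/fscalarsP; exists (c * d).
  by rewrite fmulE ux uy pmul_scalars.
- move=> x y /fscalarsP[c ux] /fscalarsP[d uy]; apply: unflatten_inj.
  by rewrite !fmulE ux uy !pmul_scalars mulrC.
- move=> x y z /fscalarsP[c ux] _ _; apply: unflatten_inj; apply/eqP.
  by rewrite !fmulE -subr_eq0 ux [_ - _]assoc_scalar_l.
move=> x /fscalarsP[c ux] x_neq0.
have c_neq0 : c != 0 by apply: contraNneq x_neq0 => c0; rewrite -unflatten_eq0 ux c0 scale0r.
exists (flatten (c^-1 *: pone)); first by apply/fscalarsP; exists c^-1; rewrite flattenK.
by apply: unflatten_inj; rewrite fmulE ux flattenK pmul_scalars divff // scale1r unflatten_fone.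
Qed.

Lemma fmul_assocE u v w :
  (fmul (fmul u v) w == fmul u (fmul v w)) =
  (assoc s a (unflatten u) (unflatten v) (unflatten w) == 0).
Proof. by rewrite (inj_eq flatten_inj) !fmulE /assoc subr_eq0. Qed.

Lemma forall_unflatten (P : 'rV[L]_m -> Prop) :
  (forall u : W, P (unflatten u)) -> forall x, P x.
Proof. by move=> Pu x; rewrite -[x]flattenK. Qed.

Lemma fmul_left_nucleus : left_nucleus fmul = fscalars.
Proof.
apply/setP => u; rewrite inE; have nuclearP := left_nuclearP m_gt1 s_order a_orbit.
apply/'forall_'forall_idP/fscalarsP => [Nu | /nuclearP Nu v w]; last by rewrite fmul_assocE Nu.
apply/nuclearP; apply: forall_unflatten => v; apply: forall_unflatten => w.
by apply/eqP; rewrite -fmul_assocE Nu.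
Qed.

Lemma fmul_middle_nucleus : middle_nucleus fmul = fscalars.
Proof.
apply/setP => u; rewrite inE; have nuclearP := middle_nuclearP m_gt1 s_order a_orbit.
apply/'forall_'forall_idP/fscalarsP => [Nu | /nuclearP Nu v w]; last by rewrite fmul_assocE Nu.
apply/nuclearP; apply: forall_unflatten => v; apply: forall_unflatten => w.
by apply/eqP; rewrite -fmul_assocE Nu.
Qed.

Lemma fmul_right_nucleus : right_nucleus fmul = fscalars.
Proof.
apply/setP => u; rewrite inE; have nuclearP := right_nuclearP m_gt1 s_order a_orbit.
apply/'forall_'forall_idP/fscalarsP => [Nu | /nuclearP Nu v w]; last by rewrite fmul_assocE Nu.
apply/nuclearP; apply: forall_unflatten => v; apply: forall_unflatten => w.
by apply/eqP; rewrite -fmul_assocE Nu.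
Qed.

Lemma fmul_center : loop_center fmul = [set u | [exists c : F, u == c *: fone]].
Proof.
rewrite /loop_center fmul_left_nucleus fmul_middle_nucleus fmul_right_nucleus !setIid.
apply/setP => u; rewrite !inE.
apply/andP/existsP => [[/fscalarsP[c uc] /forallP comm_u] | [d /eqP ud]].
  have /s_fixedP[d cd] : s c = c.
    apply/(central_scalarP s a m_gt1) => y; rewrite -uc -[y]flattenK -!fmulE.
    by congr unflatten; apply/eqP; rewrite comm_u.
  by exists d; rewrite -[u]unflattenK uc cd -flattenZ.
have ud' : unflatten u = d%:A *: pone by rewrite ud unflattenZ unflatten_fone.
split; first by apply/fscalarsP; exists d%:A.
have central_d : forall y, pmul (d%:A *: pone) y = pmul y (d%:A *: pone).
  by apply/(central_scalarP s a m_gt1)/s_fixedP; exists d.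
by apply/forallP => v; apply/eqP; apply: unflatten_inj; rewrite !fmulE ud' central_d.
Qed.

Local Notation NZ := (nzvec F (m * m)).
Definition ploop : NZ -> NZ -> NZ := nz_mul fmul_division.
Definition ploop_one : NZ := nz_one fone_neq0.
Definition ploop_loop : is_loop ploop ploop_one := nz_mul_loop fmul_division fone_neq0.

Lemma ploop_center :
  loop_center ploop = [set x | [exists c : F, (c != 0) && (val x == c *: fone)]].
Proof.
rewrite nz_loop_center fmul_center; apply/setP => x; rewrite !inE.
apply/existsP/existsP => [[c /eqP xc] | [c /andP[_ xc]]]; last by exists c.
exists c; rewrite xc eqxx andbT; apply: contraNneq (valP x) => c0.
by rewrite xc c0 scale0r.
Qed.

Lemma ploop_left_nucleus : left_nucleus ploop = [set x | val x \in fscalars].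
Proof. by rewrite nz_left_nucleus fmul_left_nucleus. Qed.
Lemma ploop_middle_nucleus : middle_nucleus ploop = [set x | val x \in fscalars].
Proof. by rewrite nz_middle_nucleus fmul_middle_nucleus. Qed.
Lemma ploop_right_nucleus : right_nucleus ploop = [set x | val x \in fscalars].
Proof. by rewrite nz_right_nucleus fmul_right_nucleus. Qed.

(* [nz_of 0] is the junk value [ploop_one]. *)
Definition nz_of (x : 'rV[L]_m) : NZ := insubd ploop_one (flatten x).
Definition nz_scalar (c : L) : NZ := nz_of (c *: pone).

Lemma val_nz_of x : x != 0 -> val (nz_of x) = flatten x.
Proof. by move=> x_neq0; rewrite insubdK // -topredE /= flatten_eq0. Qed.

Lemma val_nz_scalar c : c != 0 -> val (nz_scalar c) = flatten (c *: pone).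
Proof. by move=> c_neq0; rewrite val_nz_of // scaler_eq0 negb_or c_neq0 pone_neq0. Qed.

Lemma nz_scalar_nuclear c : c != 0 -> [/\ nz_scalar c \in left_nucleus ploop,
  nz_scalar c \in middle_nucleus ploop & nz_scalar c \in right_nucleus ploop].
Proof.
move=> c_neq0; have Kc : val (nz_scalar c) \in fscalars.
  by rewrite val_nz_scalar //; apply/fscalarsP; exists c; rewrite flattenK.
by rewrite ploop_left_nucleus ploop_middle_nucleus ploop_right_nucleus !inE Kc.
Qed.

Lemma ploop_scalarV c : c != 0 ->
  ploop (nz_scalar c) (nz_scalar c^-1) = ploop_one /\
  ploop (nz_scalar c^-1) (nz_scalar c) = ploop_one.
Proof.
move=> c_neq0; have cV_neq0 : c^-1 != 0 by rewrite invr_eq0.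
split; apply: val_inj; apply: unflatten_inj; rewrite /= fmulE !val_nz_scalar //.
  by rewrite !flattenK pmul_scalars divff // scale1r ?unflatten_fone.
by rewrite !flattenK pmul_scalars mulVf // scale1r ?unflatten_fone.
Qed.

Definition scalar_conj (c : L) : {perm NZ} :=
  conj_perm ploop_loop (nz_scalar c^-1) (nz_scalar c).

Lemma scalar_conj_aut c : c != 0 -> scalar_conj c \in loop_aut ploop.
Proof.
move=> c_neq0; have [Nl_c Nm_c Nr_c] := nz_scalar_nuclear c_neq0.
have cV_neq0 : c^-1 != 0 by rewrite invr_eq0.
have [Nl_cV _ _] := nz_scalar_nuclear cV_neq0.
exact: conj_perm_aut (ploop_scalarV c_neq0).1 Nl_c Nm_c Nr_c Nl_cV.
Qed.

Lemma scalar_conj_inner c : c != 0 -> is_inner_aut ploop ploop_one (scalar_conj c).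
Proof.
by move=> c_neq0; apply: conj_perm_inner (ploop_scalarV c_neq0).2 (scalar_conj_aut c_neq0).
Qed.

Lemma scalar_conjE c x : c != 0 ->
  unflatten (val (scalar_conj c x)) = \row_i (c^-1 * unflatten (val x) 0 i * sigma s i c).
Proof.
move=> c_neq0; have cV_neq0 : c^-1 != 0 by rewrite invr_eq0.
rewrite permE /conj_map /= !fmulE !val_nz_scalar // !flattenK.
exact: pmul_conj_scalar.
Qed.

Lemma scalar_conjM c d : c != 0 -> d != 0 ->
  (scalar_conj c * scalar_conj d)%g = scalar_conj (c * d).
Proof.
move=> c_neq0 d_neq0; apply/permP => x; apply/val_inj/unflatten_inj.
rewrite permM !scalar_conjE ?mulf_neq0 //; apply/rowP => i; rewrite !mxE invfM sigmaM; ring.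
Qed.

Lemma scalar_conj_eq1 c : c != 0 -> (scalar_conj c == 1%g) = (s c == c).
Proof.
move=> c_neq0; apply/eqP/eqP => [conj1 | sc].
  have e1_neq0 : ('e_(idx1 m_gt1) : 'rV[L]_m) != 0.
    by apply/eqP => /rowP/(_ (idx1 m_gt1)); rewrite !mxE !eqxx => /eqP; rewrite oner_eq0.
  move/permP/(_ (nz_of 'e_(idx1 m_gt1)))/(congr1 (fun x => unflatten (val x))): conj1.
  rewrite scalar_conjE // perm1 val_nz_of // flattenK => /rowP/(_ (idx1 m_gt1)).
  by rewrite !mxE eqxx /= mulr1 => /(canRL (mulKf (invr_neq0 c_neq0))); rewrite invrK mulr1.
apply/permP => x; apply/val_inj/unflatten_inj; rewrite perm1 scalar_conjE //.
by apply/rowP => i; rewrite mxE /sigma iter_fix // mulrAC mulVf // mul1r.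
Qed.

Lemma scalar_conjX c t : c != 0 -> (scalar_conj c ^+ t)%g = scalar_conj (c ^+ t).
Proof.
move=> c_neq0; elim: t => [|t IH].
  by apply/esym/eqP; rewrite scalar_conj_eq1 ?oner_eq0 ?rmorph1.
by rewrite expgSr IH scalar_conjM ?expf_neq0 // exprSr.
Qed.

Lemma order_scalar_conj c k : c != 0 ->
  (forall t, (s (c ^+ t) == c ^+ t) = (k %| t)%N) -> #[scalar_conj c]%g = k.
Proof.
move=> c_neq0 fixed_ct; have dvd_order t : (#[scalar_conj c]%g %| t)%N = (k %| t)%N.
  by rewrite order_dvdn scalar_conjX // scalar_conj_eq1 ?expf_neq0.
by apply/eqP; rewrite eqn_dvd dvd_order dvdnn -dvd_order dvdnn.
Qed.

Variable g : L.
Local Notation k := ((#|F| ^ m - 1) %/ (#|F| - 1))%N.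
Hypotheses (g_neq0 : g != 0) (g_fixed : forall t, (s (g ^+ t) == g ^+ t) = (k %| t)%N).
Hypothesis k_gt1 : (1 < k)%N.

Lemma petit_loop_theorem :
  exists (mul : 'rV[F]_(m ^ 2) -> 'rV[F]_(m ^ 2) -> 'rV[F]_(m ^ 2))
         (one : 'rV[F]_(m ^ 2)),
    is_unital_division_algebra mul one /\
    exists (K : {set 'rV[F]_(m ^ 2)}),
      is_subfield mul one K /\ #|K| = (#|F| ^ m)%N /\
    exists (lop : nzvec F (m ^ 2) -> nzvec F (m ^ 2) -> nzvec F (m ^ 2))
           (e : nzvec F (m ^ 2)),
      (forall x y, val (lop x y) = mul (val x) (val y)) /\ val e = one /\
      is_loop lop e /\
      #|[set: nzvec F (m ^ 2)]| = (#|F| ^ (m ^ 2) - 1)%N /\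
      loop_center lop = [set x | [exists c : F, (c != 0) && (val x == c *: one)]] /\
      left_nucleus lop = [set x | val x \in K] /\
      middle_nucleus lop = [set x | val x \in K] /\
      right_nucleus lop = [set x | val x \in K] /\
      (1 < #|loop_aut lop|)%N /\
      exists H : {group {perm nzvec F (m ^ 2)}},
        H \subset loop_aut lop /\ cyclic H /\ #|H| = k /\
        (forall f, f \in H -> is_inner_aut lop e f).
Proof.
exists fmul, fone; split; first exact: fmul_division.
exists fscalars; split; first exact: fscalars_subfield.
split; first exact: card_fscalars.
exists ploop, ploop_one; split=> //; split=> //; split; first exact: ploop_loop.
split; first exact: card_nzvec.
split; first exact: ploop_center.
split; first exact: ploop_left_nucleus.
split; first exact: ploop_middle_nucleus.
split; first exact: ploop_right_nucleus.
have conj_gX t : (scalar_conj g ^+ t)%g \in loop_aut ploop /\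
                  is_inner_aut ploop ploop_one (scalar_conj g ^+ t)%g.
  rewrite scalar_conjX //.
  by split; [apply: scalar_conj_aut | apply: scalar_conj_inner]; rewrite expf_neq0.
have sub_aut : <[scalar_conj g]>%g \subset loop_aut ploop.
  by apply/subsetP => f /cycleP[t ->]; case: (conj_gX t).
split.
  by rewrite (leq_trans k_gt1) // -(order_scalar_conj g_neq0 g_fixed) subset_leq_card.
exists <[scalar_conj g]>%G; split=> //; split; first exact: cycle_cyclic.
split; first by rewrite -orderE (order_scalar_conj g_neq0 g_fixed).
by move=> f /cycleP[t ->]; case: (conj_gX t).
Qed.

End PetitOverF.

Lemma separable_Xn_subX (R : idomainType) n : n%:R = 0 :> R ->
  separable_poly ('X^n - 'X : {poly R}).
Proof.
move=> n0; rewrite unlock derivB derivXn derivX -mulr_natr -polyC_natr n0 mulr0 sub0r.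
by rewrite -[X in coprimep _ X]scaleN1r coprimepZr ?oppr_eq0 ?oner_eq0 // coprimep1.
Qed.

Section FiniteFieldExtension.
Variables (F : finFieldType) (p k : nat).
Hypotheses (pcharF : p \in [pchar F]) (cardF : #|F| = (p ^ k)%N).
Local Notation q := #|F|.

Lemma k_gt0 : (0 < k)%N.
Proof. by have := finNzRing_gt1 F; rewrite cardF; case: k => //; rewrite expn0. Qed.

Lemma natr_card_pow (R : nzRingType) m : p \in [pchar R] -> (0 < m)%N -> (q ^ m)%:R = 0 :> R.
Proof.
move=> pcharR m_gt0; rewrite cardF -expnM natrX pcharf0 // expr0n.
by rewrite muln_eq0 (gtn_eqF k_gt0) (gtn_eqF m_gt0).
Qed.

Lemma finField_ext_exists m : (0 < m)%N -> {L : fieldExtType F | \dim {:L} = m}.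
Proof.
move=> m_gt0; set Q := (q ^ m)%N.
have size_XQX (R : nzRingType) : size ('X^Q - 'X : {poly R}) = Q.+1.
  have Q_gt1 : (1 < Q)%N by rewrite -(expn0 q) ltn_exp2l // finNzRing_gt1.
  by rewrite size_polyDl ?size_polyXn // size_polyN size_polyX.
have /FinSplittingFieldFor[L splitL] : 'X^Q - 'X != 0 :> {poly F}.
  by rewrite -size_poly_eq0 size_XQX.
exists L; have [zs XQX_zs defL] := splitL.
rewrite rmorphB rmorphXn /= map_polyX in XQX_zs.
have rootE x : (x \in zs) = (x ^+ Q == x).
  by rewrite -root_prod_XsubC -(eqp_root XQX_zs) /root !hornerE subr_eq0.
have uniq_zs : uniq zs.
  rewrite -separable_prod_XsubC -(eqp_separable XQX_zs) separable_Xn_subX //.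
  by rewrite natr_card_pow ?pchar_lalg.
(* The roots of X^Q - X, which generate L, are fixed by alpha^m. *)
have [alpha _ alphaE] := finField_galois_generator (sub1v (fullv : {vspace L})).
have alpha_mE x : (alpha ^+ m)%g x = x ^+ Q.
  rewrite /Q; elim: (m) x => [|i IH] x; first by rewrite gal_id.
  by rewrite expgSr galM ?memvf // alphaE ?memvf // IH dimv1 expn1 expnSr exprM.
have all_roots x : x \in zs.
  rewrite rootE -alpha_mE; apply/eqP/fixedSpaceP.
  suff <- : <<1 & zs>>%VS = fixedSpace (alpha ^+ m)%g by rewrite defL memvf.
  apply/eqP; rewrite defL eqEsubv subvf -{1}defL -[fixedSpace _]subfield_closed agenvS //.
  by rewrite subv_add sub1v; apply/span_subvP => z; rewrite rootE -alpha_mE => /eqP/fixedSpaceP.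
apply: (@expnI q); first exact: finNzRing_gt1.
rewrite -card_fieldExt; have -> : #|FinFieldExtType L| = size zs.
  rewrite -(card_uniqP (uniq_zs : uniq (zs : seq (FinFieldExtType L)))).
  by apply: eq_card => x; rewrite all_roots.
by apply: succn_inj; rewrite -(size_prod_XsubC zs id) -(eqp_size XQX_zs) size_XQX.
Qed.

End FiniteFieldExtension.

Lemma iter_pFrobenius_aut (R : nzRingType) p (pcharR : p \in [pchar R]) n x :
  iter n (pFrobenius_aut pcharR) x = x ^+ (p ^ n).
Proof.
elim: n => [|n IH] /=; first by rewrite expr1.
by rewrite IH pFrobenius_autE expnSr exprM.
Qed.

Lemma geometric_quotientE q m : (1 < q)%N ->
  ((q ^ m - 1) %/ (q - 1))%N = (\sum_(i < m) q ^ i)%N.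
Proof. by move=> q_gt1; rewrite !subn1 predn_exp mulKn // -subn1 subn_gt0. Qed.

Lemma geometric_quotient_gt1 q m : (1 < q)%N -> (1 < m)%N ->
  (1 < (q ^ m - 1) %/ (q - 1))%N.
Proof.
move=> q_gt1; case: m => [|[|m]] // _; rewrite geometric_quotientE // !big_ord_recl /=.
by rewrite expn0 add1n ltnS ltn_addr // expn_gt0 ltnW.
Qed.

Section Frobenius.
Variables (F : finFieldType) (p k : nat) (L : fieldExtType F).
Hypotheses (pcharF : p \in [pchar F]) (cardF : #|F| = (p ^ k)%N).
Local Notation q := #|F|.
Local Notation m := (\dim {:L}).

Let pcharL : p \in [pchar L]. Proof. by rewrite pchar_lalg. Qed.
(* The Frobenius [x |-> x ^+ q], as an iterate of [x |-> x ^+ p] to make it a ring morphism. *)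
Local Notation frob := (sigma (pFrobenius_aut pcharL) k).

Lemma frobE x : frob x = x ^+ q.
Proof. by rewrite cardF -iter_pFrobenius_aut. Qed.

Lemma iter_frobE i x : sigma frob i x = x ^+ (q ^ i).
Proof. by elim: i => [|i IH]; rewrite ?expr1 // expnSr exprM -IH -frobE. Qed.

Lemma frob_order x : sigma frob m x = x.
Proof. by rewrite iter_frobE -card_fieldExt (@expf_card (FinFieldExtType L)). Qed.

Lemma frob_fixedP x : frob x = x <-> exists c : F, x = c%:A.
Proof.
have Fx y : (y \in 1%VS) = (frob y == y).
  by rewrite (Fermat's_little_theorem (1%AS : {subfield L}) y) dimv1 expn1 frobE.
split=> [/eqP | [c ->]]; first by rewrite -Fx => /vlineP.
by apply/eqP; rewrite -Fx rpredZ ?mem1v.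
Qed.

Lemma frob_nonfixed : (1 < m)%N -> exists a, frob a != a.
Proof.
move=> m_gt1; have : ~~ ({:L} <= 1)%VS.
  by apply: contraL m_gt1 => /dimvS; rewrite dimv1 -ltnNge ltnS.
case/subvPn => a _ a_notF; exists a; apply: contra a_notF => /eqP /frob_fixedP[c ->].
by rewrite rpredZ ?mem1v.
Qed.

Lemma frob_orbit a : prime m -> frob a != a ->
  forall i, (0 < i < m)%N -> sigma frob i a != a.
Proof.
move=> m_prime frob_a i /andP[i_gt0 lt_im]; apply: contra frob_a => /eqP fix_i.
have coprime_mi : coprime m i.
  by rewrite prime_coprime //; apply: contraL lt_im => /(dvdn_leq i_gt0); rewrite leqNgt.
by have := iter_gcdn_fixed fix_i (frob_order a); rewrite gcdnC (eqP coprime_mi) /= => ->.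
Qed.

Lemma frob_generator : exists2 g : L, g != 0 &
  forall t, (frob (g ^+ t) == g ^+ t) = ((q ^ m - 1) %/ (q - 1) %| t)%N.
Proof.
have q_gt1 : (1 < q)%N := finNzRing_gt1 F.
have [u gen_u] := cyclicP (field_unit_group_cyclic [set: {unit FinFieldExtType L}]%G).
have order_u : #[u]%g = (q ^ m - 1)%N.
  by rewrite orderE -gen_u card_finField_unit card_fieldExt subn1.
have u_neq0 : val u != 0 by rewrite -unitfE (valP u).
exists (val u) => // t; have ut_neq0 : val u ^+ t != 0 by rewrite expf_neq0.
rewrite frobE -{1}(subnK (ltnW q_gt1)) addn1 exprS -{3}[val u ^+ t]mulr1.
rewrite (inj_eq (mulfI ut_neq0)) -exprM.
have -> : val u ^+ (t * (q - 1)) = val (u ^+ (t * (q - 1)))%g by rewrite FinRing.val_unitX.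
rewrite -FinRing.val_unit1 val_eqE -order_dvdn order_u.
rewrite -{1}(divnK (_ : q - 1 %| q ^ m - 1)%N); last by rewrite !subn1 dvdn_pred_predX.
by rewrite dvdn_pmul2r // subn_gt0.
Qed.

End Frobenius.

Theorem mainTheorem5 (q m : nat)
  (hq : exists p k : nat, prime p /\ (0 < k)%N /\ q = (p ^ k)%N)
  (hm : prime m) :
  exists (F : finFieldType), #|F| = q /\
  exists (mul : 'rV[F]_(m ^ 2) -> 'rV[F]_(m ^ 2) -> 'rV[F]_(m ^ 2))
         (one : 'rV[F]_(m ^ 2)),
    is_unital_division_algebra mul one /\
    exists (K : {set 'rV[F]_(m ^ 2)}),
      is_subfield mul one K /\ #|K| = (q ^ m)%N /\
    (* the loop L = nonzero elements of the algebra *)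
    exists (lop : nzvec F (m ^ 2) ->
                  nzvec F (m ^ 2) -> nzvec F (m ^ 2))
           (e : nzvec F (m ^ 2)),
      (forall x y, val (lop x y) = mul (val x) (val y)) /\ val e = one /\
      is_loop lop e /\
      #|[set: nzvec F (m ^ 2)]| = (q ^ (m ^ 2) - 1)%N /\
      loop_center lop = [set x | [exists c : F, (c != 0) && (val x == c *: one)]] /\
      left_nucleus lop = [set x | val x \in K] /\
      middle_nucleus lop = [set x | val x \in K] /\
      right_nucleus lop = [set x | val x \in K] /\
      (1 < #|loop_aut lop|)%N /\
      exists H : {group {perm nzvec F (m ^ 2)}},
        H \subset loop_aut lop /\ cyclic H /\
        #|H| = ((q ^ m - 1) %/ (q - 1))%N /\
        (forall f, f \in H -> is_inner_aut lop e f).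
Proof.
have [p [k [p_prime [k_gt0 ->]]]] := hq.
have [F pcharF cardF] := pPrimePowerField p_prime k_gt0.
have m_gt1 := prime_gt1 hm.
have [L dimL] := finField_ext_exists pcharF cardF (ltnW m_gt1).
exists F; split=> //; rewrite -cardF; subst m.
have [a a_nonfixed] := frob_nonfixed pcharF cardF m_gt1.
have [g g_neq0 g_fixed] := frob_generator L pcharF cardF.
apply: (petit_loop_theorem m_gt1 (frob_order pcharF cardF) (frob_fixedP pcharF cardF)
  (frob_orbit cardF hm a_nonfixed) g_neq0 g_fixed).
exact: geometric_quotient_gt1 (finNzRing_gt1 F) m_gt1.
Qed.
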